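(* Let $a \ge 1$ and let $G$ be a non-nilpotent group of order $2^a\cdot 3$ that has a descendant of order $2^a\cdot 9$. Then $F(G) \cong C_2^{a-1}\times C_3$ and $G/O_2(G) \cong S_3$.
   Context: $F(G)$ denotes the Fitting subgroup and $O_2(G)$ the largest normal $2$-subgroup of $G$. The $F$-central series is $\nu_0(G)=F(G)$ and $\nu_{i+1}(G)$ is the smallest normal subgroup $N$ of $F(G)$ with $N\le\nu_i(G)$ such that $\nu_i(G)/N$ is centralized by $F(G)$ and is a direct product of elementary abelian groups; the $F$-class of $G$ is the least $c$ with $\nu_c(G)=1$. If $G$ has $F$-class $c$, a group $H$ is a descendant of $G$ if $H$ has $F$-class $c+1$ and $H/\nu_c(H)\cong G$. *)

From HB Require Import structures.
From mathcomp Require Import all_boot all_order all_algebra all_fingroup all_solvable.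
Set Implicit Arguments. Unset Strict Implicit. Unset Printing Implicit Defensive.
Local Open Scope group_scope.

(* A finite group Q is a direct product of elementary abelian groups:
   Q is abelian and each of its Sylow p-subgroups 'O_p(Q) is elementary abelian. *)
Definition dprod_elem_abelian (hT : finGroupType) (Q : {set hT}) : bool :=
  abelian Q && [forall p : 'I_#|Q|.+1, prime p ==> p.-abelem 'O_p(Q)].

Definition nu_cand (gT : finGroupType) (G : {group gT}) (M : {set gT})
    (N : {group gT}) : bool :=
  [&& N <| 'F(G), N \subset M,
      ('F(G) / N) \subset 'C(M / N) & dprod_elem_abelian (M / N)].

(* The F-central series; nu_{i+1} is the smallest candidate, i.e. the
   intersection of all candidates (the candidates are closed under intersection). *)
Fixpoint nu (gT : finGroupType) (G : {group gT}) (i : nat) : {set gT} :=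
  match i with
  | 0 => 'F(G)
  | i'.+1 => \bigcap_(N : {group gT} | nu_cand G (nu G i') N) N
  end.

Definition has_Fclass (gT : finGroupType) (G : {group gT}) (c : nat) : Prop :=
  nu G c = 1 /\ forall i, i < c -> nu G i != 1.

Definition descendant (gT hT : finGroupType) (G : {group gT}) (H : {group hT}) : Prop :=
  exists c : nat, [/\ has_Fclass G c, has_Fclass H c.+1 & (H / nu H c) \isog G].

From HB Require Import structures.
From mathcomp Require Import all_boot all_order all_algebra all_fingroup all_solvable.
From mathcomp Require Import all_character.
Set Implicit Arguments. Unset Strict Implicit. Unset Printing Implicit Defensive.
Local Open Scope group_scope.

(* Then Z := nu_c(H) is a nontrivial subgroup with |H/Z| = 2^a * 3, so |Z| = 3.
   The workhorse is [nu_succ_sub]: if P <| F(H) has abelian quotient and the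
   image of nu_i(H) in F(H)/P has prime order, then nu_{i+1}(H) <= P.
   Applied with P = O_2(H) (and P = O_2(H) Z) it shows that nu_2(H), and even
   nu_1(H) when O_2'(F(H)) <= Z, lie in the 2-group O_2(H), which cannot
   contain Z.  Hence c = 1 (c = 0 is impossible since F(G) != 1), and
   O_3(G) ≅ O_3(H/Z) != 1.  On the side of G, nu_1(G) = 1 makes O_2(G)
   elementary abelian; O_3(G) has order 3, and since G/C_G(O_3(G)) has order
   at most 2, O_2(G) has index at most 2 in a Sylow 2-subgroup, and index
   exactly 2 as G is not nilpotent.  So F(G) = O_2(G) x O_3(G) ≅ C_2^(a-1) x
   C_3 and G/O_2(G) is a group of order 6 with trivial O_2, i.e. S_3. *)

Section SmallGroups.
Variable gT : finGroupType.
Implicit Types Q X : {group gT}.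

Lemma cyclic_dvd_prime p Q : prime p -> #|Q| %| p -> cyclic Q.
Proof.
move=> p_pr dQ; have [Q1|ntQ] := eqVneq #|Q| 1%N.
  by rewrite (card1_trivg Q1) cyclic1.
by rewrite prime_cyclic // (prime_nt_dvdP p_pr ntQ dQ).
Qed.

Lemma elem_dprod_dvd_prime p Q : prime p -> #|Q| %| p -> dprod_elem_abelian Q.
Proof.
move=> p_pr dQ; rewrite /dprod_elem_abelian cyclic_abelian ?(cyclic_dvd_prime p_pr) //=.
apply/forallP=> q; apply/implyP=> q_pr.
have dOq : #|'O_q(Q)| %| p := dvdn_trans (cardSg (pcore_sub _ _)) dQ.
have [O1|ntO] := eqVneq #|'O_q(Q)| 1%N; first by rewrite (card1_trivg O1) abelem1.
have Op := prime_nt_dvdP p_pr ntO dOq.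
have : (p : nat) \in (q : nat_pred).
  by apply: (pgroupP (pcore_pgroup q Q)); rewrite ?Op.
by rewrite inE => /eqP pq; rewrite -pq in Op *; apply: prime_abelem.
Qed.

Lemma abelian_dvd_sq p X : prime p -> #|X| %| p ^ 2 -> abelian X.
Proof.
move=> p_pr dX; apply: (@p2group_abelian _ p).
  by apply: pnat_dvd dX _; rewrite pnatX pnat_id.
by rewrite -(pfactorK 2 p_pr) dvdn_leq_log ?expn_gt0 ?prime_gt0.
Qed.

End SmallGroups.

Section FCentralSeries.
Variables (gT : finGroupType) (G : {group gT}).
Implicit Types M N P : {group gT}.

(* Sufficient condition for N to be a candidate for the term following M:
   [F(G), M] <= N makes F(G) centralize M/N, and an M/N of order dividing a
   prime is a product of elementary abelian groups. *)
Lemma nu_candP p M N : prime p ->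
  N <| 'F(G) -> N \subset M -> [~: 'F(G), M] \subset N -> #|M / N| %| p ->
  nu_cand G M N.
Proof.
move=> p_pr nNF sNM sFMN dMN.
by rewrite /nu_cand nNF sNM quotient_cents2r // (elem_dprod_dvd_prime p_pr).
Qed.

Lemma nu_cand_refl M : M <| 'F(G) -> nu_cand G M M.
Proof.
move=> nMF; apply: (nu_candP (p := 2)) => //.
  by rewrite commg_subr normal_norm.
by rewrite trivg_quotient cards1.
Qed.

(* Every term nu_i(G) is a subgroup normal in F(G) (by induction, using that
   nu_i(G) is itself a candidate, so nu_{i+1}(G) <= nu_i(G) <= F(G)). *)
Lemma nu_props i :
  [/\ group_set (nu G i), nu G i \subset 'F(G) & 'F(G) \subset 'N(nu G i)].
Proof.
elim: i => [|i [gK sKF nKF]] /=.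
  by split; [exact: Fitting_group_set | exact: subxx | exact: normG].
have candK : nu_cand G (Group gK) (Group gK) by rewrite nu_cand_refl // /normal sKF.
split; first exact: group_set_bigcap.
  exact: subset_trans (bigcap_inf _ candK) sKF.
by apply: norms_bigcap; apply/bigcapsP => N /and4P[/andP[]].
Qed.

Canonical nu_group i := Group (let: And3 gK _ _ := nu_props i in gK).

Lemma nu_normal i : nu G i <| 'F(G).
Proof. by case: (nu_props i) => _ sKF nKF; rewrite /normal sKF. Qed.

Lemma nu_min i N : nu_cand G (nu G i) N -> nu G i.+1 \subset N.
Proof. exact: bigcap_inf. Qed.

Lemma nu_mono i j : i <= j -> nu G j \subset nu G i.
Proof.
move/subnK <-; elim: (j - i) => [|k IHk] //=.
exact: subset_trans (nu_min (nu_cand_refl (nu_normal _))) IHk.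
Qed.

(* Main tool: if P <| F(G) has abelian quotient F(G)/P and the image of
   nu_i(G) in F(G)/P has order dividing a prime, then nu_{i+1}(G) <= P,
   because P :&: nu_i(G) is a candidate for nu_{i+1}(G). *)
Lemma nu_succ_sub p i P : prime p ->
  P <| 'F(G) -> abelian ('F(G) / P) -> #|nu G i / P| %| p ->
  nu G i.+1 \subset P.
Proof.
move=> p_pr nPF abFP dNP; have nNF := nu_normal i.
have nPN : nu G i \subset 'N(P) := subset_trans (normal_sub nNF) (normal_norm nPF).
apply: subset_trans (subsetIl P (nu G i)); apply: nu_min.
apply: (nu_candP p_pr); rewrite ?normalI ?subsetIr //.
  rewrite subsetI commg_subr normal_norm // andbT.
  apply: subset_trans (commgS _ (normal_sub nNF)) _.
  exact: der1_min (normal_norm nPF) abFP.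
by rewrite (card_isog (second_isog nPN)).
Qed.

(* For a candidate N for nu_1(G), the image of O_p(G) in F(G)/N lies in the
   Sylow p-subgroup of F(G)/N, which is elementary abelian. *)
Lemma nu1_cand_pcore_abelem p N : prime p ->
  nu_cand G 'F(G) N -> p.-abelem ('O_p(G) / N).
Proof.
move=> p_pr /and4P[_ _ _ /andP[_ elemFN]].
rewrite -p_core_Fitting.
have sOq : 'O_p('F(G)) / N \subset 'O_p('F(G) / N) by apply: morphim_pcore.
suff abO : p.-abelem 'O_p('F(G) / N) by apply: abelemS sOq abO.
have [O1|ntO] := eqsVneq 'O_p('F(G) / N) 1; first by rewrite O1 abelem1.
have [_ p_dv_O _] := pgroup_pdiv (pcore_pgroup p _) ntO.
have lt_p : p < #|'F(G) / N|.+1.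
  by rewrite ltnS (leq_trans (dvdn_leq _ p_dv_O)) ?subset_leq_card ?pcore_sub.
exact: (implyP (forallP elemFN (Ordinal lt_p))).
Qed.

(* If nu_1(G) = 1 then O_p(G) is elementary abelian for every prime p: for
   x, y in O_p(G), both x ^+ p and [~ x, y] lie in every candidate. *)
Lemma pcore_abelem_nu1 p : prime p -> nu G 1 = 1 -> p.-abelem 'O_p(G).
Proof.
move=> p_pr nu1; have sOF : 'O_p(G) \subset 'F(G) by rewrite -p_core_Fitting pcore_sub.
have inCand x y N : x \in 'O_p(G) -> y \in 'O_p(G) -> nu_cand G 'F(G) N ->
    (x ^+ p \in N) && ([~ x, y] \in N).
  move=> Ox Oy candN; have /and4P[/andP[_ nNF] _ _ _] := candN.
  have nNO := subset_trans sOF nNF.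
  have [Nx Ny] := (subsetP nNO x Ox, subsetP nNO y Oy).
  have /(abelemP p_pr)[abO sqO] := nu1_cand_pcore_abelem p_pr candN.
  have [Ox' Oy'] := (mem_quotient N Ox, mem_quotient N Oy).
  apply/andP; split; apply: coset_idr; rewrite ?groupX ?groupR //.
    by rewrite morphX ?sqO.
  by rewrite morphR //; apply/eqP/commgP; apply: (centsP abO).
have inNu1 x y : x \in 'O_p(G) -> y \in 'O_p(G) -> x ^+ p = 1 /\ [~ x, y] = 1.
  move=> Ox Oy; split; apply/set1gP; rewrite -nu1;
    by apply/bigcapP => N /(inCand x y N Ox Oy)/andP[].
apply/(abelemP p_pr); split => [|x Ox]; last exact: (inNu1 x x Ox Ox).1.
by apply/centsP => x Ox y Oy; apply/commgP/eqP; apply: (inNu1 x y Ox Oy).2.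
Qed.

End FCentralSeries.

Section FittingDecomposition.
Variables (gT : finGroupType) (G : {group gT}) (p : nat).

Lemma Fitting_pcore_dprod : 'O_p(G) \x 'O_p^'('F(G)) = 'F(G).
Proof. by rewrite -(p_core_Fitting p); apply/nilpotent_pcoreC/Fitting_nil. Qed.

Lemma pcore_normal_Fitting : 'O_p(G) <| 'F(G).
Proof. by rewrite -(p_core_Fitting p) pcore_normal. Qed.

Lemma card_Fitting_quo_pcore : #|'F(G) / 'O_p(G)| = #|'O_p^'('F(G))|.
Proof.
rewrite -divg_normal ?pcore_normal_Fitting //.
by rewrite -(dprod_card Fitting_pcore_dprod) mulKn.
Qed.

Lemma card_pcoreC_Fitting_dvd a m :
  prime p -> #|G| = (p ^ a * m)%N -> #|'O_p^'('F(G))| %| m.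
Proof.
move=> p_pr cardG; rewrite -(@Gauss_dvdr _ (p ^ a)).
  by rewrite -cardG cardSg // (subset_trans (pcore_sub _ _)) ?Fitting_sub.
by rewrite coprime_sym (pnat_coprime _ (pcore_pgroup _ _)) // pnatX pnat_id.
Qed.

End FittingDecomposition.

Section DescendantSide.
Variables (hT : finGroupType) (H : {group hT}) (a : nat).
Hypothesis cardH : #|H| = (2 ^ a * 9)%N.

Let P := 'O_2(H).
Let Q := 'O_2^'('F(H)).

Lemma card_Q_dvd9 : #|Q| %| 9.
Proof. exact: (card_pcoreC_Fitting_dvd _ cardH). Qed.

(* F(H)/O_2(H) has the order of Q, which divides 3^2, hence is abelian. *)
Lemma Fitting_quo_O2_abelian : abelian ('F(H) / P).
Proof.
by apply: (@abelian_dvd_sq _ 3); rewrite // card_Fitting_quo_pcore card_Q_dvd9.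
Qed.

Lemma card3_notsub_O2 (X : {group hT}) : #|X| = 3 -> ~~ (X \subset P).
Proof.
move=> cardX; apply/negP => /cardSg; rewrite cardX => d3.
by have := pgroupP (pcore_pgroup 2 H) 3 isT d3.
Qed.

(* A nontrivial K <= H with |H/K| = 2^a*3 has order 3: comparing orders in
   N_H(K)/K, |K| divides 3. *)
Lemma card_quotient_kernel (K : {group hT}) :
  K \subset H -> K :!=: 1 -> #|H / K| = (2 ^ a * 3)%N -> #|K| = 3.
Proof.
move=> sKH ntK cardHK.
rewrite -quotientInorm card_quotient ?subsetIr // in cardHK.
have sKN : K \subset 'N_H(K) by rewrite subsetI sKH normG.
have dNH : #|'N_H(K)| %| #|H| := cardSg (subsetIl _ _).
have e9 : (2 ^ a * 9 = 3 * (2 ^ a * 3))%N by rewrite mulnCA.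
rewrite -(Lagrange sKN) cardHK cardH e9 dvdn_pmul2r ?muln_gt0 ?expn_gt0 // in dNH.
have ntK' : #|K| != 1%N by rewrite -trivg_card1.
exact: (elimT (prime_nt_dvdP (isT : prime 3) ntK') dNH).
Qed.

(* If nu_1(H) has order 3 it cannot contain Q: otherwise |F(H)/O_2(H)| = |Q|
   divides 3, so O_2(H) is a candidate for nu_1(H), which forces the order-3
   group nu_1(H) into the 2-group O_2(H). *)
Lemma Q_notsub_nu1 : #|nu H 1| = 3 -> ~~ (Q \subset nu H 1).
Proof.
move=> card_nu1; apply/negP => sQnu1; apply: (negP (card3_notsub_O2 card_nu1)).
apply: (nu_succ_sub (p := 3)); rewrite ?pcore_normal_Fitting ?Fitting_quo_O2_abelian //=.
by rewrite card_Fitting_quo_pcore -card_nu1 cardSg.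
Qed.

(* If nu_1(H) has order 3 then H/nu_1(H) has a nontrivial normal 3-subgroup:
   otherwise O_3(H) <= nu_1(H), while Q is a normal 3-subgroup of H. *)
Lemma pcore3_quotient_nu1 : #|nu H 1| = 3 -> 'O_3(H / nu H 1) != 1.
Proof.
move=> card_nu1; apply: contraNneq (Q_notsub_nu1 card_nu1) => O3_1.
have sO3F : 'O_3(H) \subset 'F(H) by rewrite -p_core_Fitting pcore_sub.
have nZO3 := subset_trans sO3F (normal_norm (nu_normal H 1)).
have sQO3 : Q \subset 'O_3(H).
  apply: pcore_max; first by apply: pnat_dvd card_Q_dvd9 _; rewrite -[9]/(3 ^ 2)%N pnatX.
  exact: char_normal (char_trans (pcore_char _ _) (Fitting_char H)).
apply: subset_trans sQO3 _; rewrite -quotient_sub1 // -O3_1.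
exact: morphim_pcore.
Qed.

(* For Z <| F(H) of order 3, the subgroup O_2(H) Z is normal in F(H) with
   index dividing 3 (since |Q| divides 9), and contains O_2(H) with index 3. *)
Lemma O2_join_card3 (Z : {group hT}) : Z <| 'F(H) -> #|Z| = 3 ->
  [/\ P <*> Z <| 'F(H), #|'F(H) / (P <*> Z)| %| 3 & #|(P <*> Z) / P| = 3].
Proof.
move=> nZF cardZ; have nPF : P <| 'F(H) := pcore_normal_Fitting H 2.
have nPZF : P <*> Z <| 'F(H) := normalY nPF nZF.
have nPZ : Z \subset 'N(P) := subset_trans (normal_sub nZF) (normal_norm nPF).
have cardPZ : #|P <*> Z| = (#|P| * 3)%N.
  rewrite norm_joinEr // TI_cardMg ?cardZ //; apply: coprime_TIg.
  by rewrite cardZ (pnat_coprime (pcore_pgroup _ _)).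
split => //.
  rewrite card_quotient ?normal_norm //.
  have := Lagrange (normal_sub nPZF).
  rewrite -(dprod_card (Fitting_pcore_dprod H 2)) cardPZ -mulnA => /eqP.
  rewrite eqn_pmul2l ?cardG_gt0 // => /eqP cardQ.
  by rewrite -(@dvdn_pmul2l 3) // cardQ card_Q_dvd9.
rewrite card_quotient; last first.
  exact: subset_trans (normal_sub nPZF) (normal_norm nPF).
have := Lagrange (joing_subl P Z); rewrite cardPZ => /eqP.
by rewrite eqn_pmul2l ?cardG_gt0 // => /eqP.
Qed.

(* If nu_c(H) has order 3 then c <= 1: otherwise O_2(H) nu_c(H) is a
   candidate for nu_1(H), hence nu_1(H) has image of order dividing 3 in
   F(H)/O_2(H), so nu_2(H) <= O_2(H), which cannot contain nu_c(H). *)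
Lemma Fclass_le1 c : #|nu H c| = 3 -> c <= 1.
Proof.
move=> card_nuc; rewrite leqNgt; apply/negP => lt1c.
have [nPZF dFPZ cardPZP] := O2_join_card3 (nu_normal H c) card_nuc.
have sNu1 : nu H 1 \subset P <*> nu H c.
  apply: (nu_succ_sub (p := 3) (i := 0)) => //.
  exact: cyclic_abelian (cyclic_dvd_prime _ dFPZ).
have sNu2 : nu H 2 \subset P.
  apply: (nu_succ_sub (p := 3)); rewrite ?pcore_normal_Fitting ?Fitting_quo_O2_abelian //.
  by rewrite -cardPZP cardSg ?quotientS.
apply: (negP (card3_notsub_O2 card_nuc)).
exact: subset_trans (nu_mono H lt1c) sNu2.
Qed.

End DescendantSide.

Lemma order_involution (gT : finGroupType) (t : gT) :
  t ^+ 2 = 1 -> t != 1 -> #[t] = 2.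
Proof.
move=> t2 ntt; have ntt' : #[t] != 1%N by rewrite order_eq1.
by apply: (elimT (prime_nt_dvdP (isT : prime 2) ntt')); rewrite order_dvdn t2.
Qed.

(* Two distinct involutions of a group Q of order 6 generate Q: the subgroup
   they generate has even order dividing 6 and at least 3 elements. That
   subgroup is dihedral, so Q is isomorphic to D_6. *)
Lemma dihedral_of_involutions (gT : finGroupType) (Q : {group gT}) x y :
  x \in Q -> y \in Q -> #[x] = 2 -> #[y] = 2 -> x != y -> #|Q| = 6 ->
  Q \isog [set: 'D_6].
Proof.
move=> Qx Qy ox oy nxy cardQ; have := involutions_gen_dihedral ox oy nxy.
set K := <<[set x; y]>>; suff -> : K = Q by rewrite cardQ.
have sKQ : K \subset Q by rewrite gen_subG subUset !sub1set Qx Qy.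
have [Kx Ky] : x \in K /\ y \in K by split; apply: mem_gen; rewrite !inE eqxx ?orbT.
have dK6 : #|K| %| 6 by rewrite -cardQ cardSg.
have d2K : 2 %| #|K| by rewrite -ox order_dvdG.
have lt2K : 2 < #|K|.
  have ntx : x != 1 by rewrite -order_eq1 ox.
  have nty : y != 1 by rewrite -order_eq1 oy.
  have s1xy : 1 |: [set x; y] \subset K by rewrite !subUset !sub1set group1 Kx Ky.
  apply: leq_trans (subset_leq_card s1xy).
  by rewrite cardsU1 cards2 nxy !inE ![1 == _]eq_sym (negPf ntx) (negPf nty).
apply/eqP; rewrite eqEcard sKQ cardQ.
have : #|K| \in divisors 6 by rewrite -dvdn_divisors.
by rewrite !inE => /or4P[]/eqP cardK; rewrite cardK in d2K lt2K *.
Qed.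

(* The transpositions (0 1) and (0 2) are distinct involutions of S_3. *)
Lemma S3_isog_D6 : [set: 'S_3] \isog [set: 'D_6].
Proof.
pose i0 : 'I_3 := ord0; pose i1 : 'I_3 := inord 1; pose i2 : 'I_3 := inord 2.
have [n01 n02 n21] : [/\ i0 != i1, i0 != i2 & i2 != i1].
  by split; apply/eqP => /(congr1 val); rewrite /= ?inordK.
have ntt j : i0 != j -> tperm i0 j != 1.
  by move=> n0j; apply: contraNneq n0j => /permP/(_ i0); rewrite tpermL perm1 => ->.
have invol j : i0 != j -> #[tperm i0 j] = 2.
  by move=> n0j; rewrite order_involution ?ntt // expgS expg1 tperm2.
apply: (dihedral_of_involutions (x := tperm i0 i1) (y := tperm i0 i2)).
- by rewrite inE.
- by rewrite inE.
- exact: invol.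
- exact: invol.
- apply: (contraNneq _ n01) => /permP/(_ i1).
  by rewrite tpermR (tpermD n01 n21) => ->.
- by rewrite cardsT card_Sn.
Qed.

(* A group of order 6 with no nontrivial normal 2-subgroup is isomorphic to
   S_3: a non-normal Sylow 2-subgroup <[x]> and a conjugate <[x ^ g]> of it
   provide two distinct involutions. *)
Lemma S3_of_card6 (gT : finGroupType) (Q : {group gT}) :
  #|Q| = 6 -> 'O_2(Q) = 1 -> Q \isog [set: 'S_3].
Proof.
move=> cardQ O2Q; have [S sylS] := Sylow_exists 2 Q.
have cardS : #|S| = 2 by rewrite (card_Hall sylS) cardQ p_part.
have [x defS] : exists x, S :=: <[x]> by apply/cyclicP; rewrite prime_cyclic ?cardS.
have ox : #[x] = 2 by rewrite /order -defS cardS.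
have Qx : x \in Q by rewrite (subsetP (pHall_sub sylS)) // defS cycle_id.
have [g Qg nSg] : exists2 g, g \in Q & g \notin 'N(S).
  apply/subsetPn/negP => nSQ.
  have : S \subset 'O_2(Q).
    by rewrite pcore_max ?(pHall_pgroup sylS) // /normal (pHall_sub sylS).
  by rewrite O2Q => /subset_leq_card; rewrite cards1 cardS.
apply: isog_trans (isog_symr S3_isog_D6).
apply: (dihedral_of_involutions Qx (groupJ Qx Qg)); rewrite ?orderJ //.
by apply: contra nSg => /eqP exg; rewrite inE defS -cycleJ -exg.
Qed.

Lemma index_subgroupI (gT : finGroupType) (G A C : {group gT}) :
  A \subset G -> C \subset G -> #|A : A :&: C| <= #|G : C|.
Proof.
move=> sAG sCG; rewrite -(leq_pmul2r (cardG_gt0 C)) (mulnC #|G : C|) Lagrange //.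
rewrite -(leq_pmul2l (cardG_gt0 [group of A :&: C])) mulnA Lagrange ?subsetIl //.
by rewrite mul_cardG mulnC leq_mul2l subset_leq_card ?mulG_subG ?sAG ?orbT.
Qed.

(* If T <| G has prime order p then |G : C_G(T)| <= p - 1: this index is the
   size of the conjugacy class of a generator t of T, which lies in T minus 1. *)
Lemma index_cent_prime (gT : finGroupType) (G T : {group gT}) p :
  prime p -> T <| G -> #|T| = p -> #|G : 'C_G(T)| <= p.-1.
Proof.
move=> p_pr nTG cardT; have [t defT] : exists t, T :=: <[t]>.
  by apply/cyclicP; rewrite prime_cyclic ?cardT.
have ntT : t != 1 by apply: contraTneq p_pr => t1; rewrite -cardT defT t1 cycle1 cards1.
rewrite defT cent_cycle index_cent1.
have -> : p.-1 = #|T :\ 1| by rewrite -cardT (cardsD1 1 T) group1.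
apply: subset_leq_card; apply/subsetP => _ /imsetP[g Gg ->].
rewrite !inE conjg_eq1 ntT memJ_norm ?defT ?cycle_id //.
by rewrite -defT (subsetP (normal_norm nTG)).
Qed.

Section GroupSide.
Variables (gT : finGroupType) (G : {group gT}) (a : nat).
Hypothesis cardG : #|G| = (2 ^ a * 3)%N.

Lemma solvable_card_2a3 : solvable G.
Proof.
apply: Burnside_p_a_q_b; suff : size (primes #|G|) <= size [:: 2; 3] by [].
apply: uniq_leq_size; first exact: primes_uniq.
move=> p; rewrite mem_primes cardG => /and3P[p_pr _].
rewrite Euclid_dvdM // Euclid_dvdX // !dvdn_prime2 //.
by case/orP => [/andP[/eqP -> _]|/eqP ->]; rewrite !inE.
Qed.

Lemma Fitting_nontrivial : 'F(G) != 1.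
Proof.
rewrite (trivg_Fitting solvable_card_2a3) trivg_card1 cardG.
by rewrite muln_eq1 andbF.
Qed.

Lemma card_Sylow2 (S : {group gT}) : 2.-Sylow(G) S -> #|S| = (2 ^ a)%N.
Proof.
move=> sylS; rewrite (card_Hall sylS) cardG partnM ?expn_gt0 // partnX.
have [-> ->] : (2`_2 = 2 /\ 3`_2 = 1)%N by rewrite !p_part.
by rewrite muln1.
Qed.

Hypothesis ntO3 : 'O_3(G) != 1.

Lemma card_O3 : #|'O_3(G)| = 3.
Proof.
have ntO3' : #|'O_3(G)| != 1%N by rewrite -trivg_card1.
apply: (elimT (prime_nt_dvdP (isT : prime 3) ntO3')); rewrite -(@Gauss_dvdr _ (2 ^ a)).
  by rewrite -cardG cardSg ?pcore_sub.
by rewrite (pnat_coprime (pcore_pgroup _ _)) // (pnatX _ 2 a).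
Qed.

(* For a Sylow 2-subgroup S we have G = S O_3(G); S :&: C_G(O_3(G)) is
   normalized by S and centralized by O_3(G), so it is a normal 2-subgroup of
   G and lies in O_2(G). *)
Lemma Sylow2_cent_O3_sub_O2 (S : {group gT}) :
  2.-Sylow(G) S -> S :&: 'C_G('O_3(G)) \subset 'O_2(G).
Proof.
move=> sylS; have [sSG pS _] := and3P sylS.
apply: pcore_max; first exact: pgroupS (subsetIl _ _) pS.
have defG : S * 'O_3(G) = G.
  apply/eqP; rewrite eqEcard mulG_subG sSG pcore_sub /= TI_cardMg.
    by rewrite (card_Sylow2 sylS) card_O3 cardG.
  by apply: coprime_TIg; rewrite (pnat_coprime pS) ?card_O3.
rewrite /normal (subset_trans (subsetIl _ _) sSG) /= -{1}defG mulG_subG.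
apply/andP; split.
  rewrite normsI ?normG // (subset_trans sSG) //.
  by rewrite -{1}(setIidPl (normal_norm (pcore_normal 3 G))) normal_norm ?subcent_normal.
by rewrite cents_norm // centsC (subset_trans (subsetIr _ _)) ?subsetIr.
Qed.

(* O_2(G) has index at most 2 in a Sylow 2-subgroup S of G, as it contains
   S :&: C_G(O_3(G)), whose index in S is at most |G : C_G(O_3(G))| <= 2. *)
Lemma index_O2_Sylow (S : {group gT}) : 2.-Sylow(G) S -> #|S : 'O_2(G)| <= 2.
Proof.
move=> sylS; have sO2S : 'O_2(G) \subset S := pcore_sub_Hall sylS.
apply: leq_trans (dvdn_leq _ (indexgS S (Sylow2_cent_O3_sub_O2 sylS))) _.
  by rewrite indexg_gt0.
apply: leq_trans (index_subgroupI (pHall_sub sylS) (subsetIl _ _)) _.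
by rewrite (index_cent_prime _ (pcore_normal _ _) card_O3).
Qed.

Hypotheses (a_gt0 : 0 < a) (nnilG : ~~ nilpotent G).

(* |O_2(G)| = 2^(a-1): it is at least half a Sylow 2-subgroup, and not a
   whole one, else G = O_2(G) O_3(G) = F(G) would be nilpotent. *)
Lemma card_O2 : #|'O_2(G)| = (2 ^ a.-1)%N.
Proof.
have [S sylS] := Sylow_exists 2 G.
have cardS := card_Sylow2 sylS.
have [k cardO2] := p_natP (pcore_pgroup 2 G).
have sO2S : 'O_2(G) \subset S := pcore_sub_Hall sylS.
have le_ka : k <= a by rewrite -(leq_exp2l _ _ (isT : 1 < 2)) -cardO2 -cardS subset_leq_card.
have le_ak : a <= k.+1.
  rewrite -(leq_exp2l _ _ (isT : 1 < 2)) -cardS expnS mulnC -cardO2 -(Lagrange sO2S).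
  by rewrite leq_mul2l index_O2_Sylow ?orbT.
have ne_ka : k != a.
  apply: contra nnilG => /eqP eq_ka.
  have sO23F : 'O_2(G) * 'O_3(G) \subset 'F(G).
    by rewrite mulG_subG !(normal_sub (pcore_normal_Fitting _ _)).
  suff <- : 'F(G) = G by apply: Fitting_nil.
  apply/eqP; rewrite eqEcard Fitting_sub /=; apply: leq_trans (subset_leq_card sO23F).
  rewrite TI_cardMg ?cardO2 ?eq_ka ?card_O3 ?cardG //.
  by apply: coprime_TIg; rewrite cardO2 card_O3 coprimeXl.
rewrite cardO2; congr (_ ^ _)%N; apply/eqP.
by rewrite -eqSS (prednK a_gt0) eqn_leq le_ak ltn_neqAle ne_ka le_ka.
Qed.

(* O_2'(F(G)) contains O_3(G) and has order dividing 3, so it has order 3. *)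
Lemma card_pcoreC2_Fitting : #|'O_2^'('F(G))| = 3.
Proof.
apply/eqP; rewrite eqn_dvd (card_pcoreC_Fitting_dvd _ cardG) //= -{1}card_O3 cardSg //.
rewrite pcore_max ?pcore_normal_Fitting //.
by apply: sub_pgroup (pcore_pgroup 3 G) => p; rewrite !inE => /eqP ->.
Qed.

Lemma Fitting_isog : 2.-abelem 'O_2(G) ->
  'F(G) \isog [set: ('rV['Z_2]_(a.-1) * 'Z_3)%type].
Proof.
move=> abelO2; have -> : [set: ('rV['Z_2]_(a.-1) * 'Z_3)%type] =
    setX [set: 'rV['Z_2]_(a.-1)] [set: 'Z_3] by apply/setP => -[u v]; rewrite !inE.
apply: (isog_dprod (Fitting_pcore_dprod G 2) (setX_dprod [set: _]%G [set: _]%G)).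
  rewrite -morphim_pairg1; apply: isog_trans (sub_isog (subsetT _) (injm_pairg1 _ _)).
  rewrite (isog_abelem_card _ abelO2) cardsT card_mx card_ord mul1n card_O2 eqxx andbT.
  exact: (mx_Fp_abelem 1 (a.-1) (isT : prime 2)).
rewrite -morphim_pair1g; apply: isog_trans (sub_isog (subsetT _) (injm_pair1g _ _)).
rewrite (isog_abelem_card _ (prime_abelem (isT : prime 3) card_pcoreC2_Fitting)).
by rewrite cardsT card_ord card_pcoreC2_Fitting eqxx prime_abelem ?cardsT ?card_ord.
Qed.

Lemma quotient_O2_isog_S3 : G / 'O_2(G) \isog [set: 'S_3].
Proof.
apply: S3_of_card6; last exact: trivg_pcore_quotient.
rewrite card_quotient ?normal_norm ?pcore_normal // -divgS ?pcore_sub //.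
by rewrite cardG card_O2 -(prednK a_gt0) expnS mulnAC mulnK ?expn_gt0.
Qed.

End GroupSide.

Theorem lemma6p1 (gT : finGroupType) (G : {group gT}) (a : nat) :
  1 <= a ->
  #|G| = (2 ^ a * 3)%N ->
  ~~ nilpotent G ->
  (exists (hT : finGroupType) (H : {group hT}),
      #|H| = (2 ^ a * 9)%N /\ descendant G H) ->
  'F(G) \isog [set: ('rV['Z_2]_(a.-1) * 'Z_3)%type] /\
  (G / 'O_2(G)) \isog [set: 'S_3].
Proof.
move=> a_gt0 cardG nnilG [hT [H [cardH [c [[nuGc _] [_ ntnuH] isoHG]]]]].
have card_nuHc : #|nu H c| = 3.
  apply: (card_quotient_kernel cardH _ (ntnuH c (ltnSn c))).
    exact: subset_trans (normal_sub (nu_normal H c)) (Fitting_sub H).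
  by rewrite (card_isog isoHG) cardG.
have c_gt0 : 0 < c.
  by rewrite lt0n; apply: contra_neq (Fitting_nontrivial cardG) => c0; rewrite -nuGc c0.
have c1 : c = 1%N by apply/eqP; rewrite eqn_leq (Fclass_le1 cardH card_nuHc).
subst c; have ntO3 : 'O_3(G) != 1.
  by rewrite -(isog_eq1 (isog_pcore 3 isoHG)) (pcore3_quotient_nu1 cardH).
split; last exact: (quotient_O2_isog_S3 cardG ntO3 a_gt0 nnilG).
exact: (Fitting_isog cardG ntO3 a_gt0 nnilG (pcore_abelem_nu1 (p := 2) isT nuGc)).
Qed.
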